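(* Let $J\in\{1/2,1,3/2,\dots\}$, $M=2J$, $\Delta>M$, let $\mathcal{G}=(\mathcal{V},\mathcal{E})$ be a finite connected graph and $x,y\in\mathcal{V}$ distinct. Then, as operators on $\bigotimes_{z\in\mathcal{V}}\mathbb{C}^{M+1}$, $$-\frac{2J}{\Delta}(J^2-S_x^3S_y^3)\le-\frac{1}{2\Delta}(S_x^+S_y^-+S_x^-S_y^+)\le\frac{2J}{\Delta}(J^2-S_x^3S_y^3)$$ and $$\Big(1-\frac{2J}{\Delta}\Big)(J^2-S_x^3S_y^3)\le h_{xy}\le\Big(1+\frac{2J}{\Delta}\Big)(J^2-S_x^3S_y^3)\le\frac{M}{2}\Big(1+\frac{M}{\Delta}\Big)(\mathcal{N}_x^{loc}+\mathcal{N}_y^{loc}).$$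
   Context: $\mathbb{C}^{M+1}$ has orthonormal basis $\{\delta_j\}_{j=-J}^{J}$; $S^-\delta_j=\sqrt{J(J+1)-j(j-1)}\,\delta_{j-1}$ ($j>-J$), $S^-\delta_{-J}=0$; $S^+\delta_j=\sqrt{J(J+1)-j(j+1)}\,\delta_{j+1}$ ($j<J$), $S^+\delta_J=0$; $S^3\delta_j=j\delta_j$. For an operator $A$ on $\mathbb{C}^{M+1}$, $A_x$ acts as $A$ on the tensor factor at $x$ and as identity elsewhere. $h_{xy}=J^2-\frac{1}{2\Delta}(S_x^+S_y^-+S_x^-S_y^+)-S_x^3S_y^3$ and $\mathcal{N}^{loc}=J-S^3$ (local particle number operator). *)

From HB Require Import structures.
From mathcomp Require Import all_boot all_order all_algebra.
From mathcomp.real_closed Require Import complex.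
From mathcomp Require Import reals.
Set Implicit Arguments. Unset Strict Implicit. Unset Printing Implicit Defensive.
Import Order.TTheory GRing.Theory Num.Theory.
Local Open Scope ring_scope.

Section Spin.
Variable R : realType.
Local Notation C := (R[i]).

(* A local spin value J = M/2; basis vector delta_j of C^(M+1), j = -J..J, is
   indexed by k : 'I_(M+1) with j = k - J. *)
Definition spinJ (M : nat) : C := ((M%:R / 2)%:C)%C.
Definition jval (M : nat) (k : 'I_M.+1) : C := k%:R - spinJ M.

(* Local operators as matrices: A k l = <delta_k, A delta_l>. *)
Definition Sminus (M : nat) : 'M[C]_(M.+1) :=
  \matrix_(k, l) (if k.+1 == l :> nat then
     sqrtC (spinJ M * (spinJ M + 1) - jval l * (jval l - 1)) else 0).
Definition Splus (M : nat) : 'M[C]_(M.+1) :=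
  \matrix_(k, l) (if k == l.+1 :> nat then
     sqrtC (spinJ M * (spinJ M + 1) - jval l * (jval l + 1)) else 0).
Definition S3 (M : nat) : 'M[C]_(M.+1) :=
  \matrix_(k, l) (if k == l then jval k else 0).
Definition Nloc (M : nat) : 'M[C]_(M.+1) := (spinJ M)%:M - S3 M.

(* Operators on the tensor product  \bigotimes_{z in V} C^(M+1), written in the
   product basis indexed by configurations sigma : V -> 'I_(M+1). *)
Definition cfg (V : finType) (M : nat) := {ffun V -> 'I_M.+1}.
Definition Op (V : finType) (M : nat) := cfg V M -> cfg V M -> C.

Definition loc (V : finType) (M : nat) (x : V) (A : 'M[C]_(M.+1)) : Op V M :=
  fun s t => A (s x) (t x) * (([forall z, (z != x) ==> (s z == t z)]) : bool)%:R.

Definition op_id (V : finType) (M : nat) : Op V M := fun s t => ((s == t) : bool)%:R.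
Definition op_mul (V : finType) (M : nat) (A B : Op V M) : Op V M :=
  fun s t => \sum_(r : cfg V M) A s r * B r t.
Definition op_add (V : finType) (M : nat) (A B : Op V M) : Op V M :=
  fun s t => A s t + B s t.
Definition op_scale (V : finType) (M : nat) (a : C) (A : Op V M) : Op V M :=
  fun s t => a * A s t.
Definition op_sub (V : finType) (M : nat) (A B : Op V M) : Op V M :=
  fun s t => A s t - B s t.

Definition psd (V : finType) (M : nat) (A : Op V M) : Prop :=
  forall v : cfg V M -> C,
    0 <= \sum_(s : cfg V M) \sum_(t : cfg V M) (v s)^* * A s t * v t.
Definition op_le (V : finType) (M : nat) (A B : Op V M) : Prop := psd (op_sub B A).

Definition Zxy (V : finType) (M : nat) (x y : V) : Op V M :=
  op_sub (op_scale (spinJ M ^+ 2) (@op_id V M))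
         (op_mul (loc x (S3 M)) (loc y (S3 M))).
Definition flip (V : finType) (M : nat) (x y : V) : Op V M :=
  op_add (op_mul (loc x (Splus M)) (loc y (Sminus M)))
         (op_mul (loc x (Sminus M)) (loc y (Splus M))).
Definition hxy (V : finType) (M : nat) (Delta : R) (x y : V) : Op V M :=
  op_sub (op_sub (op_scale (spinJ M ^+ 2) (@op_id V M))
                 (op_scale (1 / (2 * (Delta%:C)%C)) (flip x y)))
         (op_mul (loc x (S3 M)) (loc y (S3 M))).

End Spin.

Definition connected_graph (V : finType) (e : rel V) : Prop :=
  symmetric e /\ irreflexive e /\ (forall u v : V, connect e u v).

(* In the product basis, Z = J^2 - S^3_x S^3_y is diagonal with entries
   J^2 - j_x j_y, while the flip term S^+_x S^-_y + S^-_x S^+_y has nonnegative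
   symmetric entries whose row sums are at most 4 J (J^2 - j_x j_y).  A
   nonnegative symmetric matrix F whose row sums are dominated by a diagonal d
   satisfies -d <= F <= d in the Loewner order, and scaling by 1/(2 Delta)
   gives the first four inequalities.  The last one is diagonal: writing
   n_z = J - j_z, the difference of the two sides is (1 + 2J/Delta) n_x n_y. *)

From HB Require Import structures.
From mathcomp Require Import all_boot all_order all_algebra.
From mathcomp.real_closed Require Import complex.
From mathcomp Require Import reals.
From mathcomp Require Import ring zify.
Set Implicit Arguments.
Unset Strict Implicit.
Unset Printing Implicit Defensive.
Import Order.TTheory GRing.Theory Num.Theory.
Local Open Scope ring_scope.

Section QuadraticForm.
Variables (R : realType) (V : finType) (M : nat).
Local Notation C := R[i].
Local Notation cfg := (cfg V M).
Local Notation Op := (Op R V M).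

Definition qform (A : Op) (v : cfg -> C) : C :=
  \sum_s \sum_t (v s)^* * A s t * v t.

Definition diag_op (d : cfg -> C) : Op := fun s t => (s == t)%:R * d s.

Lemma qformD (A B : Op) v : qform (op_add A B) v = qform A v + qform B v.
Proof.
rewrite /qform -big_split; apply: eq_bigr => s _ /=.
by rewrite -big_split; apply: eq_bigr => t _; rewrite /op_add mulrDr mulrDl.
Qed.

Lemma qformZ a (A : Op) v : qform (op_scale a A) v = a * qform A v.
Proof.
rewrite /qform mulr_sumr; apply: eq_bigr => s _.
by rewrite mulr_sumr; apply: eq_bigr => t _; rewrite /op_scale; ring.
Qed.

Lemma qform_diag d v : qform (diag_op d) v = \sum_s d s * ((v s)^* * v s).
Proof.
apply: eq_bigr => s _; rewrite (bigD1 s) //= big1 => [|t]; last first.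
  by rewrite /diag_op eq_sym => /negbTE ->; rewrite mul0r mulr0 mul0r.
by rewrite /diag_op eqxx addr0 mul1r; ring.
Qed.

Lemma eq_psd (A B : Op) : psd A -> (forall s t, A s t = B s t) -> psd B.
Proof.
move=> psdA eqAB v; change (0 <= qform B v).
suff -> : qform B v = qform A v by exact: psdA.
by apply: eq_bigr => s _; apply: eq_bigr => t _; rewrite eqAB.
Qed.

Lemma psd_scale a (A : Op) : 0 <= a -> psd A -> psd (op_scale a A).
Proof.
move=> a0 psdA v; change (0 <= qform (op_scale a A) v).
by rewrite qformZ mulr_ge0 //; exact: psdA.
Qed.

Lemma psd_diag d : (forall s, 0 <= d s) -> psd (diag_op d).
Proof.
move=> d0 v; change (0 <= qform (diag_op d) v).
rewrite qform_diag; apply: sumr_ge0 => s _.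
by rewrite mulr_ge0 // mulrC mul_conjC_ge0.
Qed.

Lemma double_sum_symmetrize (G : cfg -> cfg -> C) :
  \sum_s \sum_t (G s t + G t s) = 2 * \sum_s \sum_t G s t.
Proof.
under eq_bigr do rewrite big_split.
by rewrite big_split /= [X in _ + X]exchange_big mulr_natl mulr2n.
Qed.

(* Expanding [0 <= sum_(s,t) F s t |v s + sg v t|^2] gives twice the quadratic
   form of [diag (row sums of F) + sg F], for [sg = +1] or [-1]. *)
Lemma psd_diag_dominant (d : cfg -> C) (F : Op) (b : bool) :
  (forall s t, 0 <= F s t) -> (forall s t, F s t = F t s) ->
  (forall s, \sum_t F s t <= d s) ->
  psd (op_add (diag_op d) (op_scale ((-1) ^+ b) F)).
Proof.
move=> F0 Fsym Frow v.
change (0 <= qform (op_add (diag_op d) (op_scale ((-1) ^+ b) F)) v).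
rewrite qformD qformZ qform_diag.
set sg : C := (-1) ^+ b; set n := fun s => (v s)^* * v s.
have n0 s : 0 <= n s by rewrite /n mulrC mul_conjC_ge0.
have expand : \sum_s \sum_t F s t * ((v s + sg * v t)^* * (v s + sg * v t))
    = 2 * (\sum_s (\sum_t F s t) * n s + sg * qform F v).
  pose G s t := F s t * n s + sg * ((v s)^* * F s t * v t).
  have -> : \sum_s (\sum_t F s t) * n s + sg * qform F v = \sum_s \sum_t G s t.
    rewrite /qform mulr_sumr -big_split; apply: eq_bigr => s _ /=.
    by rewrite big_distrl mulr_sumr -big_split.
  rewrite -double_sum_symmetrize; apply: eq_bigr => s _; apply: eq_bigr => t _.
  rewrite /G /n Fsym /sg; clear G; case: b @sg; rewrite /= ?expr0 ?expr1.
  - by rewrite !rmorphD !rmorphM /= rmorphN1; ring.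
  - by rewrite !rmorphD !rmorphM /= rmorph1; ring.
suff : 0 <= 2 * (\sum_s d s * n s + sg * qform F v) by rewrite pmulr_rge0.
have -> : \sum_s d s * n s = \sum_s (d s - \sum_t F s t) * n s + \sum_s (\sum_t F s t) * n s.
  by rewrite -big_split; apply: eq_bigr => s _; rewrite /= mulrBl subrK.
rewrite -addrA mulrDr -expand; apply: addr_ge0.
  by rewrite mulr_ge0 // sumr_ge0 // => s _; rewrite mulr_ge0 ?subr_ge0.
apply: sumr_ge0 => s _; apply: sumr_ge0 => t _.
by rewrite mulr_ge0 // mulrC mul_conjC_ge0.
Qed.

End QuadraticForm.

Lemma loc_diag (R : realType) (V : finType) (M : nat) (z : V)
    (A : 'M[R[i]]_M.+1) (a : 'I_M.+1 -> R[i]) :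
  (forall k l, A k l = (k == l)%:R * a k) ->
  forall s t, loc z A s t = diag_op (fun s => a (s z)) s t.
Proof.
move=> HA s t; rewrite /loc /diag_op HA mulrAC -natrM mulnb.
congr ((nat_of_bool _)%:R * _); apply/andP/eqP => [[/eqP sz /forallP st] | <-].
  apply/ffunP => w; case: (eqVneq w z) => [->|wz] //.
  exact/eqP/(implyP (st w)).
by split=> //; apply/forallP => w; apply/implyP.
Qed.

Section TwoSites.
Variables (R : realType) (V : finType) (M : nat) (x y : V).
Hypothesis neq_xy : x != y.
Local Notation C := R[i].
Local Notation cfg := (cfg V M).
Implicit Types (s t r : cfg) (k l : 'I_M.+1).

Definition agree_off (s t : cfg) : bool :=
  [forall z, (z != x) && (z != y) ==> (s z == t z)].

Definition cfg_set2 (s : cfg) (k l : 'I_M.+1) : cfg :=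
  [ffun z => if z == x then k else if z == y then l else s z].

Lemma cfg_set2_x s k l : cfg_set2 s k l x = k.
Proof. by rewrite ffunE eqxx. Qed.

Lemma cfg_set2_y s k l : cfg_set2 s k l y = l.
Proof. by rewrite ffunE eq_sym (negbTE neq_xy) eqxx. Qed.

Lemma agree_offP s t :
  reflect (forall z, z != x -> z != y -> s z = t z) (agree_off s t).
Proof.
apply: (iffP forallP) => [H z zx zy | H z]; first exact/eqP/(implyP (H z))/andP.
by apply/implyP => /andP[zx zy]; rewrite H.
Qed.

Lemma agree_offC s t : agree_off s t = agree_off t s.
Proof. by apply/agree_offP/agree_offP => H z zx zy; rewrite H. Qed.

Lemma agree_off_set2 s k l : agree_off s (cfg_set2 s k l).
Proof. by apply/agree_offP => z zx zy; rewrite ffunE (negbTE zx) (negbTE zy). Qed.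

Lemma cfg_set2K s t : agree_off s t -> cfg_set2 s (t x) (t y) = t.
Proof.
move/agree_offP=> st; apply/ffunP => z; rewrite ffunE.
by case: eqP => [->|/eqP zx] //; case: eqP => [->|/eqP zy] //; rewrite st.
Qed.

Lemma eq_cfg_agree_off s t :
  (s == t) = [&& s x == t x, s y == t y & agree_off s t].
Proof.
apply/eqP/and3P => [<-|[/eqP sx /eqP sy st]]; first by split=> //; apply/agree_offP.
by rewrite -(cfg_set2K st) -sx -sy cfg_set2K //; apply/agree_offP.
Qed.

(* The intermediate configuration of [A_x B_y] is forced: it is [t] at [x] and
   [s] elsewhere. *)
Lemma agree_loc_loc s r t :
  [forall z, (z != x) ==> (s z == r z)] && [forall z, (z != y) ==> (r z == t z)]
  = (r == cfg_set2 s (t x) (s y)) && agree_off s t.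
Proof.
apply/andP/andP => [[/forallP sr /forallP rt] | [/eqP-> /agree_offP st]].
  have srz z : z != x -> s z = r z by move=> zx; apply/eqP/(implyP (sr z)).
  have rtz z : z != y -> r z = t z by move=> zy; apply/eqP/(implyP (rt z)).
  split; last by apply/agree_offP => z zx zy; rewrite srz // rtz.
  apply/eqP/ffunP => z; rewrite ffunE.
  case: eqP => [->|/eqP zx]; first by rewrite rtz.
  by case: eqP => [->|/eqP zy]; rewrite srz // eq_sym.
split; apply/forallP => z; apply/implyP => nz; rewrite ffunE.
  by rewrite (negbTE nz); case: (z =P y) => [->|].
by case: (z =P x) => [->|/eqP zx] //; rewrite (negbTE nz) st.
Qed.

Lemma loc_mul_loc (A B : 'M[C]_M.+1) s t :
  op_mul (loc x A) (loc y B) s t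
  = A (s x) (t x) * B (s y) (t y) * (agree_off s t)%:R.
Proof.
rewrite /op_mul /loc.
under eq_bigr => r _ do rewrite mulrACA -natrM mulnb agree_loc_loc -mulnb natrM mulrA.
rewrite -big_distrl /= (bigD1 (cfg_set2 s (t x) (s y))) //= eqxx big1.
  by rewrite addr0 cfg_set2_x cfg_set2_y mulr1.
by move=> r /negbTE->; rewrite mulr0.
Qed.

Lemma sum_agree_off s (f : 'I_M.+1 -> 'I_M.+1 -> C) :
  \sum_(t : cfg) f (t x) (t y) * (agree_off s t)%:R = \sum_k \sum_l f k l.
Proof.
under eq_bigr do rewrite mulr_natr mulrb.
rewrite -big_mkcond pair_big /=.
rewrite (reindex_onto (fun p => cfg_set2 s p.1 p.2) (fun t => (t x, t y))) /=;
  last exact: cfg_set2K.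
apply: eq_big => [[k l]|[k l] _]; last by rewrite cfg_set2_x cfg_set2_y.
by rewrite agree_off_set2 cfg_set2_x cfg_set2_y eqxx.
Qed.

End TwoSites.

Lemma ladder_prod_le (M a b : nat) : (a <= M)%N -> (b <= M)%N ->
  (a * (M.+1 - a) * (b.+1 * (M - b)) <= (M * (a * (M - b))) ^ 2)%N.
Proof.
move=> aM bM; case: (posnP a) => [->|a0]; first by rewrite !mul0n.
case: (posnP (M - b)) => [->|Mb0]; first by rewrite !muln0.
set u := (a * (M - b))%N.
have u1 : (1 <= u)%N by rewrite muln_gt0 a0 Mb0.
have ab : ((M.+1 - a) * b.+1 <= M * M)%N by apply: leq_mul; lia.
rewrite (_ : a * _ * _ = u * ((M.+1 - a) * b.+1))%N; last by rewrite /u; ring.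
rewrite (_ : _ ^ 2 = u * (u * (M * M)))%N; last by ring.
by rewrite leq_mul // -[X in (X <= _)%N]mul1n leq_mul.
Qed.

Section SpinMatrices.
Variables (R : realType) (M : nat).
Local Notation C := R[i].
Local Notation J := (spinJ R M).
Implicit Types (k l a b : 'I_M.+1).

Lemma spinJE : J = M%:R / 2.
Proof. by rewrite /spinJ rmorphM /= fmorphV /= !rmorph_nat. Qed.

Lemma jvalE k : jval R k = k%:R - M%:R / 2.
Proof. by rewrite /jval spinJE. Qed.

Lemma spinJ_sub_jval k : J - jval R k = (M - k)%:R.
Proof. by rewrite jvalE spinJE natrB ?leq_ord //; field. Qed.

Lemma SminusE k l :
  Sminus R M k l = if k.+1 == l :> nat then sqrtC ((l * (M.+1 - l))%:R) else 0.
Proof.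
rewrite mxE; case: ifP => // _; congr sqrtC.
rewrite spinJE jvalE natrM natrB; last exact: ltnW.
by rewrite -addn1 !natrD; field.
Qed.

Lemma SplusE k l :
  Splus R M k l = if k == l.+1 :> nat then sqrtC ((l.+1 * (M - l))%:R) else 0.
Proof.
rewrite mxE; case: ifP => // _; congr sqrtC.
by rewrite spinJE jvalE natrM natrB ?leq_ord // -addn1 !natrD; field.
Qed.

Lemma S3E k l : S3 R M k l = (k == l)%:R * jval R k.
Proof. by rewrite mxE; case: eqP; rewrite ?mul1r ?mul0r. Qed.

Lemma NlocE k l : Nloc R M k l = (k == l)%:R * (J - jval R k).
Proof. by rewrite !mxE; case: eqP => [->|_]; rewrite ?mulr1n ?mulr0n; ring. Qed.

Lemma Splus_Sminus a b : Splus R M a b = Sminus R M b a.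
Proof.
rewrite SplusE SminusE eq_sym; case: eqP => // ab.
by rewrite -ab subSS mulnC.
Qed.

Lemma Sminus_ge0 a b : 0 <= Sminus R M a b.
Proof. by rewrite SminusE; case: ifP => // _; rewrite sqrtC_ge0 ler0n. Qed.

Lemma Splus_ge0 a b : 0 <= Splus R M a b.
Proof. by rewrite Splus_Sminus Sminus_ge0. Qed.

Lemma sum_Splus_row a : \sum_k Splus R M a k = sqrtC ((a * (M.+1 - a))%:R).
Proof.
under eq_bigr do rewrite SplusE.
case Ea: (nat_of_ord a) => [|a']; first by rewrite big1 ?sqrtC0.
have a'M : (a' < M.+1)%N by apply: ltnW; rewrite -Ea.
rewrite (bigD1 (Ordinal a'M)) //= eqxx big1 ?addr0 ?subSS //.
by move=> k /eqP nk; case: eqP => // -[ak]; exfalso; apply/nk/val_inj; rewrite /= ak.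
Qed.

Lemma sum_Sminus_row b : \sum_k Sminus R M b k = sqrtC ((b.+1 * (M - b))%:R).
Proof.
under eq_bigr do rewrite SminusE.
case: (ltnP b M) => bM.
  rewrite (bigD1 (Ordinal (bM : b.+1 < M.+1)%N)) //= eqxx big1 ?addr0 //.
  by move=> k /eqP nk; case: eqP => // bk; exfalso; apply/nk/val_inj; rewrite /= bk.
rewrite (_ : M - b = 0)%N ?muln0 ?sqrtC0; last by apply/eqP; rewrite subn_eq0.
rewrite big1 // => k _; case: eqP => // bk.
by have := ltn_ord k; rewrite -bk ltnS leqNgt ltnS bM.
Qed.

Lemma sqrtC_ladder_le a b :
  sqrtC ((a * (M.+1 - a))%:R) * sqrtC ((b.+1 * (M - b))%:R)
  <= ((M * (a * (M - b)))%:R : C).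
Proof.
rewrite -ler_sqr ?nnegrE ?mulr_ge0 ?sqrtC_ge0 ?ler0n //.
by rewrite exprMn !sqrtCK -natrM -natrX ler_nat ladder_prod_le ?leq_ord.
Qed.

End SpinMatrices.

Section Bond.
Variables (R : realType) (V : finType) (M : nat) (x y : V).
Hypothesis neq_xy : x != y.
Local Notation C := R[i].
Local Notation cfg := (cfg V M).
Local Notation J := (spinJ R M).
Local Notation Z := (@Zxy R V M x y).
Local Notation F := (@flip R V M x y).
Implicit Types (s t : cfg).

Definition Zxy_diag s : C := J ^+ 2 - jval R (s x) * jval R (s y).

Lemma ZxyE s t : Z s t = diag_op Zxy_diag s t.
Proof.
rewrite /Zxy /op_sub /op_scale /op_id loc_mul_loc // !S3E.
rewrite /diag_op /Zxy_diag (eq_cfg_agree_off x y).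
by case: (s x == t x); case: (s y == t y); case: agree_off => /=; ring.
Qed.

Lemma flipE s t : F s t =
  (Splus R M (s x) (t x) * Sminus R M (s y) (t y)
   + Sminus R M (s x) (t x) * Splus R M (s y) (t y)) * (agree_off x y s t)%:R.
Proof. by rewrite /flip /op_add !loc_mul_loc // -mulrDl. Qed.

Lemma flip_ge0 s t : 0 <= F s t.
Proof.
by rewrite flipE mulr_ge0 // addr_ge0 // mulr_ge0 ?Splus_ge0 ?Sminus_ge0.
Qed.

Lemma flip_sym s t : F s t = F t s.
Proof. by rewrite !flipE agree_offC !Splus_Sminus addrC. Qed.

(* The row sum equals [sqrt(a(M+1-a)(b+1)(M-b)) + sqrt(b(M+1-b)(a+1)(M-a))]
   with [a = s x], [b = s y], while [4 J (J^2 - j_x j_y) = M a (M-b) + M b (M-a)]. *)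
Lemma flip_row_le s : \sum_t F s t <= 4 * J * Zxy_diag s.
Proof.
under eq_bigr do rewrite flipE.
rewrite (sum_agree_off neq_xy s (fun k l => Splus R M (s x) k * Sminus R M (s y) l
                                    + Sminus R M (s x) k * Splus R M (s y) l)).
under eq_bigr do rewrite big_split /= -!mulr_sumr.
rewrite big_split /= -!mulr_suml !sum_Splus_row !sum_Sminus_row.
have -> : 4 * J * Zxy_diag s
    = (M * (s x * (M - s y)))%:R + (M * (s y * (M - s x)))%:R.
  by rewrite /Zxy_diag !jvalE spinJE !natrM !natrB ?leq_ord //; field.
by rewrite [X in _ + X]mulrC lerD // sqrtC_ladder_le.
Qed.

Lemma psd_Zxy_flip (b : bool) :
  psd (op_add (op_scale (4 * J) Z) (op_scale ((-1) ^+ b) F)).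
Proof.
have := psd_diag_dominant (d := fun s => 4 * J * Zxy_diag s) b
          flip_ge0 flip_sym flip_row_le.
by move/eq_psd; apply=> s t; rewrite /op_add /op_scale ZxyE /diag_op; ring.
Qed.

Lemma psd_Nloc_sub_Zxy (c : C) : 0 <= 1 + c ->
  psd (op_sub (op_scale (J * (1 + c)) (op_add (loc x (Nloc R M)) (loc y (Nloc R M))))
              (op_scale (1 + c) Z)).
Proof.
move=> c_ge0; pose n s z := (M - s z)%:R : C.
have d_ge0 s : 0 <= (1 + c) * (n s x * n s y) by rewrite !mulr_ge0 ?ler0n.
apply: (eq_psd (psd_diag d_ge0)) => s t.
rewrite /op_sub /op_scale /op_add ZxyE /diag_op /Zxy_diag.
rewrite !(@loc_diag _ _ _ _ _ (fun k => J - jval R k)) => [|k l|k l]; try exact: NlocE.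
by rewrite /diag_op /n -!spinJ_sub_jval; ring.
Qed.

End Bond.

Theorem mainTheorem2 (R : realType) (M : nat) (Delta : R)
    (V : finType) (e : rel V) (x y : V) :
  (0 < M)%N -> M%:R < Delta -> connected_graph e -> x != y ->
  let J := spinJ R M in
  let D := (Delta%:C)%C in
  let Z := @Zxy R V M x y in
  [/\ op_le (op_scale (- (2 * J / D)) Z) (op_scale (- (1 / (2 * D))) (@flip R V M x y)),
      op_le (op_scale (- (1 / (2 * D))) (@flip R V M x y)) (op_scale (2 * J / D) Z),
      op_le (op_scale (1 - 2 * J / D) Z) (@hxy R V M Delta x y),
      op_le (@hxy R V M Delta x y) (op_scale (1 + 2 * J / D) Z)
    & op_le (op_scale (1 + 2 * J / D) Z)
            (op_scale ((M%:R / 2) * (1 + M%:R / D))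
                      (op_add (loc x (Nloc R M)) (loc y (Nloc R M))))].
Proof.
move=> _ MD _ neq_xy J D Z.
have D_gt0 : 0 < D by rewrite ltcR (le_lt_trans _ MD).
have J_ge0 : 0 <= J by rewrite /J spinJE divr_ge0 ?ler0n.
have JD_ge0 : 0 <= 2 * J / D by rewrite divr_ge0 ?mulr_ge0 ?ler0n // ltW.
have scale_ge0 : 0 <= (2 * D)^-1 by rewrite invr_ge0 mulr_ge0 ?ler0n // ltW.
have dominated (b : bool) : psd (op_add (op_scale (2 * J / D) Z)
                               (op_scale ((-1) ^+ b / (2 * D)) (@flip R V M x y))).
  apply: (eq_psd (psd_scale scale_ge0 (psd_Zxy_flip neq_xy b))) => s t.
  by rewrite /op_add /op_scale /J /Z; field; rewrite gt_eqF.
split; [ apply: (eq_psd (dominated true)) | apply: (eq_psd (dominated false))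
       | apply: (eq_psd (dominated true)) | apply: (eq_psd (dominated false)) | ];
  try by move=> s t; rewrite /hxy /J /D /Z /Zxy /op_sub /op_add /op_scale /= ?expr1; ring.
apply: (eq_psd (psd_Nloc_sub_Zxy neq_xy (addr_ge0 ler01 JD_ge0))) => s t.
by rewrite /op_sub /op_scale /Z /J spinJE; field; rewrite gt_eqF.
Qed.
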